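(* Let $A$ be an $n\times n$ ASM and let $p=\sigma_-(A)$. Then there is a sequence of $n\times n$ ASMs $A^{(p)},A^{(p-1)},\ldots,A^{(0)}$ such that (i) $A^{(p)}=A$; (ii) $A^{(0)}$ is a permutation matrix; (iii) $\sigma_-(A^{(s)})=s$ for $s=0,1,\ldots,p$; and (iv) $h(A^{(p)})\preceq^* h(A^{(p-1)})\preceq^*\cdots\preceq^* h(A^{(0)})$.
   Context: An $n\times n$ alternating sign matrix (ASM) is an $n\times n$ matrix with entries in $\{0,1,-1\}$ such that in every row and column the nonzeros alternate in sign, beginning and ending with $+1$. $\sigma_-(B)$ denotes the number of entries equal to $-1$ in $B$. For an $n\times n$ matrix $B$, $h(B)=B^Tz_n$ where $z_n=(n,n-1,\ldots,1)^T$. For vectors $x,y\in\mathbb R^n$ (not necessarily sorted), $x\preceq^* y$ means $\sum_{j=1}^p x_j\le\sum_{j=1}^p y_j$ for all $p\le n$, with equality for $p=n$. *)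

From mathcomp Require Import all_boot all_order all_fingroup all_algebra.
Set Implicit Arguments. Unset Strict Implicit. Unset Printing Implicit Defensive.
Import Order.TTheory GRing.Theory Num.Theory.
Local Open Scope ring_scope.

(* A sequence of integers "alternates in sign, beginning and ending with +1":
   its nonzero entries form the list [:: 1; -1; 1; ...; -1; 1] (odd length, >= 1). *)
Definition alt_sign_seq (s : seq int) : bool :=
  let t := [seq x <- s | x != 0] in
  odd (size t) && all (fun k => nth 0 t k == (-1) ^+ k) (iota 0 (size t)).

Definition is_ASM (n : nat) (A : 'M[int]_n) : bool :=
  [forall i, forall j, (A i j == 0) || (A i j == 1) || (A i j == -1)] &&
  [forall i, alt_sign_seq [seq A i j | j <- enum 'I_n]] &&
  [forall j, alt_sign_seq [seq A i j | i <- enum 'I_n]].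

Definition sigma_minus (n : nat) (A : 'M[int]_n) : nat :=
  #|[set ij : 'I_n * 'I_n | A ij.1 ij.2 == -1]|.

Definition is_perm_matrix (n : nat) (A : 'M[int]_n) : bool :=
  [exists s : 'S_n, A == perm_mx s].

(* z_n = (n, n-1, ..., 1)^T, i.e. (z_n)_i = n - i for 0-based i *)
Definition zvec (n : nat) : 'cV[int]_n := \col_(i < n) (n - i)%:R.

Definition hvec (n : nat) (B : 'M[int]_n) : 'cV[int]_n := B^T *m zvec n.

Definition maj_star (n : nat) (x y : 'cV[int]_n) : Prop :=
  (forall p : nat, (p <= n)%N ->
     \sum_(j < n | (j < p)%N) x j 0 <= \sum_(j < n | (j < p)%N) y j 0) /\
  \sum_(j < n) x j 0 = \sum_(j < n) y j 0.

From mathcomp Require Import all_boot all_order all_fingroup all_algebra.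
From mathcomp Require Import zify.
Import Order.TTheory GRing.Theory Num.Theory.
Set Implicit Arguments. Unset Strict Implicit. Unset Printing Implicit Defensive.
Local Open Scope ring_scope.

(* A line of an ASM is a sequence whose prefix sums lie in {0, 1} and whose
   total is 1.  Take a -1 of A, at (r, c), in the topmost row containing a -1.
   The nearest 1 above it in column c lies in a row r1 without -1, so row r1 is
   the unit row e_c; let c1 be the column of the nearest 1 left of (r, c) in
   row r.  Adding the pattern [[1, -1], [-1, 1]] on rows r1 < r and columns
   c1 < c keeps all prefix sums in {0, 1}, removes one -1, and moves weight
   r - r1 of h(A) from coordinate c to the earlier coordinate c1, so that h
   increases for the order of prefix sums.  Iterating until no -1 is left ends
   at a permutation matrix. *)

(* [alt_from b s]: [s] completes a sign-alternating sequence (beginning and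
   ending with 1) whose nonzero entries so far sum to [b]. *)
Fixpoint alt_from (b : bool) (s : seq int) : bool :=
  match s with
  | [::] => b
  | x :: s' => if x == 0 then alt_from b s'
               else if b then (x == -1) && alt_from false s'
               else (x == 1) && alt_from true s'
  end.

(* The offset [e] makes the condition of [alt_sign_seq] (where [e = 0]) stable
   under [cons]. *)
Definition alt_nth (e : nat) (t : seq int) : bool :=
  odd (size t + e) && all (fun k => nth 0 t k == (-1) ^+ (k + e)) (iota 0 (size t)).

Lemma alt_nth_cons e x t : alt_nth e (x :: t) = (x == (-1) ^+ e) && alt_nth e.+1 t.
Proof.
rewrite /alt_nth /= -add1n iotaDl all_map /= add0n addnS /=.
case: (x == (-1) ^+ e); rewrite ?andbF //=; congr (_ && _).
by apply: eq_all => k /=; rewrite add1n addSnnS.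
Qed.

Lemma alt_nthSS e t : alt_nth e.+2 t = alt_nth e t.
Proof.
rewrite /alt_nth !addnS /= negbK; congr (_ && _); apply: eq_all => k /=.
by rewrite !addnS !exprS !mulN1r opprK.
Qed.

Lemma alt_from_filter b s : alt_from b s = alt_nth b [seq x <- s | x != 0].
Proof.
elim: s b => [|x s IH] b; first by rewrite /alt_nth /= andbT; case: b.
rewrite /=; case: eqP => [->|_] //=.
rewrite alt_nth_cons; case: b => /=.
  by rewrite expr1 alt_nthSS IH.
by rewrite expr0 IH.
Qed.

Definition alt_prefix (v : int) (s : seq int) : Prop :=
  (forall k, 0 <= v + \sum_(x <- take k s) x <= 1) /\ v + \sum_(x <- s) x = 1.

Lemma alt_prefix_cons v x s :
  alt_prefix v (x :: s) <-> 0 <= v <= 1 /\ alt_prefix (v + x) s.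
Proof.
rewrite /alt_prefix big_cons addrA; split.
  move=> [Hpre Htot]; split; first by have := Hpre 0%N; rewrite take0 big_nil addr0.
  by split=> // k; have := Hpre k.+1; rewrite /= big_cons addrA.
move=> [Hv [Hpre Htot]]; split=> // -[|k]; first by rewrite take0 big_nil addr0.
by rewrite /= big_cons addrA.
Qed.

Lemma alt_fromP b s : alt_from b s <-> alt_prefix b%:R s.
Proof.
elim: s b => [|x s IH] b.
  rewrite /alt_prefix /= big_nil addr0.
  by split=> [->|[_ /eqP]]; [split=> // k; rewrite big_nil addr0 | case: b].
rewrite alt_prefix_cons /=; have Hb : 0 <= (b%:R : int) <= 1 by case: b.
have [->|x0] := eqVneq x 0; first by rewrite addr0 -IH; tauto.
have Hpre0 v : alt_prefix v s -> 0 <= v <= 1.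
  by case=> Hpre _; have := Hpre 0%N; rewrite take0 big_nil addr0.
case: b IH Hb => IH Hb; split.
- by case/andP=> /eqP -> /IH.
- case=> _ Hs; have Hx := Hpre0 _ Hs; have Ex : x = -1 by lia.
  by move: Hs; rewrite Ex eqxx /= IH addrN.
- by case/andP=> /eqP -> /IH.
- case=> _ Hs; have Hx := Hpre0 _ Hs; have Ex : x = 1 by lia.
  by move: Hs; rewrite Ex eqxx /= IH add0r.
Qed.

Lemma alt_sign_seqP s : alt_sign_seq s <-> alt_prefix 0 s.
Proof.
suff -> : alt_sign_seq s = alt_from false s by apply: alt_fromP.
rewrite alt_from_filter /alt_sign_seq /alt_nth addn0; congr (_ && _).
by apply: eq_all => k; rewrite addn0.
Qed.

Section PrefixSums.
Variables (R : zmodType) (n : nat).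
Implicit Types (F G : 'I_n -> R) (k : nat).

Definition psum F k : R := \sum_(j < n | (j < k)%N) F j.

Lemma psum0 F : psum F 0 = 0.
Proof. by rewrite /psum big_pred0. Qed.

Lemma psumS F (j : 'I_n) : psum F j.+1 = psum F j + F j.
Proof.
rewrite /psum (bigD1 j) //= addrC; congr (_ + _); apply: eq_bigl => i.
by rewrite ltnS ltn_neqAle andbC.
Qed.

Lemma psum_full F k : (n <= k)%N -> psum F k = \sum_j F j.
Proof. by move=> nk; apply: eq_bigl => j; rewrite (leq_trans (ltn_ord j) nk). Qed.

Lemma eq_psum F G : F =1 G -> psum F =1 psum G.
Proof. by move=> FG k; apply: eq_bigr => j _; rewrite FG. Qed.

End PrefixSums.

Lemma sum_take_map_enum (R : zmodType) n (F : 'I_n -> R) k :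
  \sum_(x <- take k [seq F j | j <- enum 'I_n]) x = psum F k.
Proof.
elim: n F k => [|m IH] F [|k].
- by rewrite take0 big_nil /psum big_pred0.
- by rewrite enum_ord0 big_nil /psum big_ord0.
- by rewrite take0 big_nil /psum big_pred0.
rewrite enum_ordSl map_cons /= big_cons -map_comp IH /psum [RHS]big_mkcond big_ord_recl /=.
by congr (_ + _); rewrite [LHS]big_mkcond; apply: eq_bigr => i _; rewrite /bump /= add1n ltnS.
Qed.

Definition alternating n (F : 'I_n -> int) : Prop :=
  (forall k, 0 <= psum F k <= 1) /\ \sum_j F j = 1.

Lemma alt_sign_seq_ordP n (F : 'I_n -> int) :
  alt_sign_seq [seq F j | j <- enum 'I_n] <-> alternating F.
Proof.
set s := [seq F j | j <- enum 'I_n].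
have sum_s : \sum_(x <- s) x = \sum_j F j.
  by rewrite -(take_size s) sum_take_map_enum psum_full // size_map size_enum_ord.
rewrite alt_sign_seqP /alt_prefix sum_s add0r.
by split=> -[Hpre Htot]; split=> // k; have := Hpre k; rewrite sum_take_map_enum add0r.
Qed.

Lemma alternating_entry n (F : 'I_n -> int) j : alternating F -> -1 <= F j <= 1.
Proof. by case=> Hpre _; have := Hpre j; have := Hpre j.+1; rewrite psumS; lia. Qed.

Lemma is_ASMP n (A : 'M[int]_n) :
  is_ASM A <-> (forall i, alternating (A i)) /\ (forall j, alternating (A^~ j)).
Proof.
split.
  case/andP=> /andP [_ /forallP Hrow] /forallP Hcol.
  by split=> [i|j]; apply/alt_sign_seq_ordP; [apply: Hrow | apply: Hcol].
case=> Hrow Hcol; apply/andP; split; [apply/andP; split|].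
- apply/forallP=> i; apply/forallP=> j.
  by have := alternating_entry j (Hrow i); lia.
- by apply/forallP=> i; apply/alt_sign_seq_ordP.
- by apply/forallP=> j; apply/(alt_sign_seq_ordP (A^~ j)).
Qed.

Lemma eq_alternating n (F G : 'I_n -> int) : F =1 G -> alternating F -> alternating G.
Proof.
move=> FG [Hpre Htot]; split=> [k|]; first by rewrite -(eq_psum FG).
by rewrite -Htot; apply: eq_bigr => j _; rewrite FG.
Qed.

Section Shift.
Variables (R : pzRingType) (n : nat).

Definition shift_at (F : 'I_n -> R) (e : R) (a b : 'I_n) (j : 'I_n) : R :=
  F j + e * ((j == a)%:R - (j == b)%:R).

Lemma psum_delta (a : 'I_n) k : psum (fun j => (j == a)%:R : R) k = (a < k)%N%:R.
Proof.
rewrite /psum big_mkcond (bigD1 a) //= eqxx big1 ?addr0 => [|j /negbTE ->].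
  by case: (a < k)%N.
by case: (j < k)%N.
Qed.

Lemma psum_shift F e a b k :
  psum (shift_at F e a b) k = psum F k + e * ((a < k)%N%:R - (b < k)%N%:R).
Proof. by rewrite /psum big_split /= -mulr_sumr sumrB -!/(psum _ k) !psum_delta. Qed.

End Shift.

Lemma alternating_shift n (F : 'I_n -> int) e (a b : 'I_n) :
  alternating F -> (a < b)%N ->
  (forall k, (a < k <= b)%N -> 0 <= psum F k + e <= 1) ->
  alternating (shift_at F e a b).
Proof.
move=> [Hpre Htot] ab Hab; split=> [k|].
  rewrite psum_shift; case: (ltnP b k) => bk.
    by rewrite (ltn_trans ab bk) subrr mulr0 addr0.
  by case: (ltnP a k) => ak; rewrite ?subr0 ?mulr1 ?subrr ?mulr0 ?addr0 ?Hab ?ak.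
rewrite -(psum_full _ (leqnn n)) psum_shift psum_full //.
by rewrite !ltn_ord subrr mulr0 addr0.
Qed.

Lemma hvecE n (B : 'M[int]_n) j : hvec B j 0 = \sum_i B i j * (n - i)%:R.
Proof. by rewrite !mxE; apply: eq_bigr => i _; rewrite !mxE. Qed.

Section Exchange.
Variables (n : nat) (A : 'M[int]_n) (r1 c1 r c : 'I_n).

Definition exchange_mx : 'M[int]_n :=
  \matrix_(i, j) (A i j + ((i == r1)%:R - (i == r)%:R) * ((j == c1)%:R - (j == c)%:R)).

Lemma exchange_row i :
  exchange_mx i =1 shift_at (A i) ((i == r1)%:R - (i == r)%:R) c1 c.
Proof. by move=> j; rewrite mxE. Qed.

Lemma exchange_col j :
  exchange_mx^~ j =1 shift_at (A^~ j) ((j == c1)%:R - (j == c)%:R) r1 r.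
Proof. by move=> i; rewrite mxE /shift_at mulrC. Qed.

Hypotheses (r1r : (r1 < r)%N) (c1c : (c1 < c)%N).

Let r1_neq_r : (r1 == r) = false. Proof. exact: ltn_eqF. Qed.
Let c1_neq_c : (c1 == c) = false. Proof. exact: ltn_eqF. Qed.

Lemma exchange_ASM :
  is_ASM A ->
  (forall k, (c1 < k <= c)%N -> psum (A r1) k = 0) ->
  (forall k, (c1 < k <= c)%N -> psum (A r) k = 1) ->
  (forall k, (r1 < k <= r)%N -> psum (A^~ c1) k = 0) ->
  (forall k, (r1 < k <= r)%N -> psum (A^~ c) k = 1) ->
  is_ASM exchange_mx.
Proof.
move=> /is_ASMP [Hrow Hcol] Hr1 Hr Hc1 Hc; apply/is_ASMP; split=> [i|j].
  apply: eq_alternating (fsym (exchange_row i)) _.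
  apply: alternating_shift => // k kc.
  have [->|ir1] := eqVneq i r1; first by rewrite r1_neq_r Hr1.
  have [->|ir] := eqVneq i r; first by rewrite Hr.
  by rewrite subrr addr0; apply: (Hrow i).1.
apply: eq_alternating (fsym (exchange_col j)) _.
apply: alternating_shift => // k kr.
have [->|jc1] := eqVneq j c1; first by rewrite c1_neq_c Hc1.
have [->|jc] := eqVneq j c; first by rewrite Hc.
by rewrite subrr addr0; apply: (Hcol j).1.
Qed.

Lemma exchange_sigma :
  A r1 c1 = 0 -> A r1 c = 1 -> A r c1 = 1 -> A r c = -1 ->
  sigma_minus exchange_mx = (sigma_minus A).-1.
Proof.
move=> A11 A12 A21 A22.
rewrite /sigma_minus [in RHS](cardsD1 (r, c)) inE /= A22 eqxx add1n /=.
apply: eq_card => -[i j]; rewrite !inE /= mxE xpair_eqE.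
have [->|ir1] := eqVneq i r1; last have [->|ir] := eqVneq i r.
all: have [->|jc1] := eqVneq j c1; last have [->|jc] := eqVneq j c.
all: by rewrite ?r1_neq_r ?c1_neq_c ?A11 ?A12 ?A21 ?A22 /= ?subrr ?mulr0 ?mul0r ?addr0.
Qed.

Lemma hvec_exchange :
  (fun j => hvec exchange_mx j 0) =1
  shift_at (fun j => hvec A j 0) ((n - r1)%:R - (n - r)%:R) c1 c.
Proof.
move=> j; rewrite /shift_at !hvecE.
have sum_delta (a : 'I_n) : \sum_i (i == a)%:R * (n - i)%:R = (n - a)%:R :> int.
  by rewrite (bigD1 a) //= eqxx mul1r big1 ?addr0 // => i /negbTE ->; rewrite mul0r.
under eq_bigr do rewrite mxE mulrDl mulrAC.
rewrite big_split /= -mulr_suml -!sum_delta -sumrB; congr (_ + _ * _).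
by apply: eq_bigr => i _; rewrite mulrBl.
Qed.

Lemma exchange_maj : maj_star (hvec A) (hvec exchange_mx).
Proof.
have weight_ge0 : 0 <= (n - r1)%:R - (n - r)%:R :> int.
  by rewrite subr_ge0 ler_nat leq_sub2l // ltnW.
split=> [p _|].
  change (psum (fun j => hvec A j 0) p <= psum (fun j => hvec exchange_mx j 0) p).
  rewrite (eq_psum hvec_exchange) psum_shift lerDl mulr_ge0 // subr_ge0.
  by case: (ltnP c p) => cp; [rewrite (ltn_trans c1c cp) | case: (c1 < p)%N].
rewrite -!(psum_full _ (leqnn n)) (eq_psum hvec_exchange) psum_shift.
by rewrite !ltn_ord subrr mulr0 addr0.
Qed.

End Exchange.

Lemma last_zero_before (f : nat -> int) m :
  (forall k, 0 <= f k <= 1) -> f 0%N = 0 -> f m = 1 ->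
  exists2 a, (a < m)%N & f a = 0 /\ forall k, (a < k <= m)%N -> f k = 1.
Proof.
move=> f01 f0; elim: m => [|m IH] fm; first by rewrite f0 in fm.
have [fm0|fm1] : f m = 0 \/ f m = 1 by have := f01 m; lia.
  by exists m => //; split=> // k km; have -> : k = m.+1 by lia.
have [a am [fa Hf]] := IH fm1; exists a; first exact: ltnW.
split=> // k /andP [ak km]; have [->|km'] : k = m.+1 \/ (k <= m)%N by lia.
  by [].
by apply: Hf; rewrite ak.
Qed.

Lemma alternating_last_one n (F : 'I_n -> int) (b : 'I_n) :
  alternating F -> F b = -1 ->
  exists2 a : 'I_n, (a < b)%N & F a = 1 /\ forall k, (a < k <= b)%N -> psum F k = 1.
Proof.
move=> [Hpre _] Fb.
have psum_b : psum F b = 1 by have := Hpre b; have := Hpre b.+1; rewrite psumS Fb; lia.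
have [a ab [psum_a Hab]] := last_zero_before Hpre (psum0 F) psum_b.
have an : (a < n)%N by apply: ltn_trans ab _.
exists (Ordinal an) => //; split=> //.
by have := Hab a.+1; rewrite ltnSn ab (psumS F (Ordinal an)) psum_a add0r; apply.
Qed.

Lemma nonneg_sum1_delta n (F : 'I_n -> int) a :
  (forall j, 0 <= F j) -> \sum_j F j = 1 -> F a = 1 -> forall j, F j = (j == a)%:R.
Proof.
move=> F_ge0 Fsum Fa; rewrite (bigD1 a) //= Fa in Fsum.
have Fsum0 : \sum_(j < n | j != a) F j = 0 by apply: (@addrI _ 1); rewrite addr0.
move=> j; have [->|ja] := eqVneq j a; first by rewrite Fa.
by rewrite (psumr_eq0P (fun j _ => F_ge0 j) Fsum0 ja).
Qed.

Lemma psum_nonneg_mono n (F : 'I_n -> int) m k :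
  (forall i : 'I_n, (i < m)%N -> 0 <= F i) -> (k <= m)%N -> 0 <= psum F k <= psum F m.
Proof.
move=> F_ge0 km; apply/andP; split.
  by apply: sumr_ge0 => i ik; apply: F_ge0; apply: leq_trans ik km.
rewrite /psum [X in _ <= X](bigID (fun i : 'I_n => (i < k)%N)) /=.
have -> : \sum_(i < n | (i < m)%N && (i < k)%N) F i = \sum_(i < n | (i < k)%N) F i.
  by apply: eq_bigl => i; case ik: (i < k)%N; rewrite ?andbF ?andbT ?(leq_trans ik km).
by rewrite lerDl; apply: sumr_ge0 => i /andP [im _]; apply: F_ge0.
Qed.

Lemma ASM_exchange_step n (A : 'M[int]_n) :
  is_ASM A -> (0 < sigma_minus A)%N ->
  exists B, [/\ is_ASM B, sigma_minus B = (sigma_minus A).-1 & maj_star (hvec A) (hvec B)].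
Proof.
move=> A_ASM; have /is_ASMP [Hrow Hcol] := A_ASM.
rewrite /sigma_minus card_gt0 => /set0Pn [ij0]; rewrite inE => Aij0.
have [[r c] /= /eqP Arc r_min] :=
  @arg_minnP _ ij0 (fun ij => A ij.1 ij.2 == -1) (fun ij => val ij.1) Aij0.
have above_ge0 (i j : 'I_n) : (i < r)%N -> 0 <= A i j.
  move=> ir; have := alternating_entry j (Hrow i).
  by case: (eqVneq (A i j) (-1)) => [/eqP /(r_min (i, j)) /=|]; lia.
have [r1 r1r [A12 Hc]] := alternating_last_one (Hcol c) Arc.
have [c1 c1c [A21 Hr]] := alternating_last_one (Hrow r) Arc.
have row_r1 := nonneg_sum1_delta (fun j => above_ge0 r1 j r1r) (Hrow r1).2 A12.
have Hr1 k : (c1 < k <= c)%N -> psum (A r1) k = 0.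
  by case/andP=> _ kc; rewrite (eq_psum row_r1) psum_delta ltnNge kc.
have Hc1 k : (r1 < k <= r)%N -> psum (A^~ c1) k = 0.
  case/andP=> _ kr; have := (Hcol c1).1 r.+1; rewrite psumS A21.
  have := psum_nonneg_mono (fun i ir => above_ge0 i c1 ir) kr; lia.
exists (exchange_mx A r1 c1 r c); split.
- exact: exchange_ASM.
- apply: exchange_sigma => //; rewrite row_r1.
  by have -> : (c1 == c) = false by exact: ltn_eqF.
- exact: exchange_maj.
Qed.

Lemma ASM_perm_mx n (A : 'M[int]_n) :
  is_ASM A -> sigma_minus A = 0%N -> is_perm_matrix A.
Proof.
move=> /is_ASMP [Hrow Hcol] /eqP; rewrite cards_eq0 => /eqP no_neg.
have A_ge0 i j : 0 <= A i j.
  have : (i, j) \notin [set ij | A ij.1 ij.2 == -1] by rewrite no_neg inE.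
  by rewrite inE /=; have := alternating_entry j (Hrow i); lia.
have /fin_all_exists [f Af] : forall i, exists j, A i j = 1.
  move=> i; have [|j /= Aij] := @psumr_neq0P _ _ xpredT (A i) (fun j _ => A_ge0 i j).
    by rewrite (Hrow i).2.
  by exists j; have := alternating_entry j (Hrow i); lia.
have f_inj : injective f.
  move=> i i' fii'.
  have := nonneg_sum1_delta (A_ge0^~ (f i)) (Hcol (f i)).2 (Af i) i'.
  by rewrite fii' Af; case: eqP.
apply/existsP; exists (perm f_inj); apply/eqP/matrixP => i j.
by rewrite perm_mxEsub !mxE permE (nonneg_sum1_delta (A_ge0 i) (Hrow i).2 (Af i)) eq_sym.
Qed.

Lemma ASM_exchange_chain n p (A : 'M[int]_n) :
  is_ASM A -> sigma_minus A = p ->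
  exists B : nat -> 'M[int]_n,
    [/\ (forall s : nat, (s <= p)%N -> is_ASM (B s)),
        B p = A,
        is_perm_matrix (B 0%N),
        (forall s : nat, (s <= p)%N -> sigma_minus (B s) = s) &
        (forall s : nat, (s < p)%N -> maj_star (hvec (B s.+1)) (hvec (B s)))].
Proof.
elim: p A => [|p IH] A A_ASM sA.
  exists (fun _ => A); split=> //; first exact: ASM_perm_mx.
  by move=> s; rewrite leqn0 => /eqP ->.
have [|A' [A'_ASM sA' maj]] := ASM_exchange_step A_ASM; first by rewrite sA.
rewrite sA /= in sA'; have [B [B_ASM Bp B0 sB majB]] := IH A' A'_ASM sA'.
exists (fun s => if s == p.+1 then A else B s); split=> //=.
- by move=> s sp; case: eqP => // ne; apply: B_ASM; lia.
- by rewrite eqxx.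
- by move=> s sp; case: eqP => [->|ne] //; apply: sB; lia.
move=> s sp; rewrite (_ : (s == p.+1) = false); last by apply/eqP; lia.
by case: eqP => [[->]|ne]; [rewrite Bp | apply: majB; lia].
Qed.

Unset Implicit Arguments.

Theorem mainTheorem9 (n : nat) (A : 'M[int]_n) :
  is_ASM A ->
  let p := sigma_minus A in
  exists B : nat -> 'M[int]_n,
    [/\ (forall s : nat, (s <= p)%N -> is_ASM (B s)),
        B p = A,
        is_perm_matrix (B 0%N),
        (forall s : nat, (s <= p)%N -> sigma_minus (B s) = s) &
        (forall s : nat, (s < p)%N -> maj_star (hvec (B s.+1)) (hvec (B s)))].
Proof. by move=> A_ASM; apply: ASM_exchange_chain. Qed.
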